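(* Let $(X,d)$ be a complete metric space and let $G:X\times X\to X$ be a mapping such that (a) $G(x,x)=x$ for all $x\in X$, and (b) for $x,y\in X$, $G(x,y)=x$ implies $y=x$. Let $T:X\to P_{cl}(X)$ be a multivalued operator with $SFix(T)\neq\emptyset$ and let $T_G(x)=\{G(x,u):u\in T(x)\}$ be the admissible perturbation of $T$ corresponding to $G$. Suppose there exist $\alpha,\beta,\gamma\ge0$ with $\alpha+\beta+\gamma<1$ such that $$H(T_G(x),T_G(y))\le\alpha d(x,y)+\beta D(x,T_G(y))+\gamma D(y,T_G(x))\quad\text{for all }x,y\in X,$$ so that $SFix(T)=\{x^*\}$ for some $x^*$, and suppose moreover that (ii) there exists $l\in(0,1)$ with $H(T(x),\{x^*\})\le l\,H(T_G(x),\{x^*\})$ for all $x\in X$, and (iii) there exists $L>0$ with $D(x,T_G(x))\le L\,D(x,T(x))$ for all $x\in X$. Then the strict fixed point problem $T(x)=\{x\}$ has the Ostrowski stability property: $T$ has a unique strict fixed point $x^*$, and for every sequence $(v_n)_{n\in\mathbb N}\subset X$ with $D(v_{n+1},T(v_n))\to0$ we have $v_n\to x^*$.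
   Context: $P_{cl}(X)$ is the family of nonempty closed subsets of $X$; $SFix(T)=\{x:T(x)=\{x\}\}$. For nonempty $A,B\subseteq X$: $D(a,B)=\inf_{b\in B}d(a,b)$, $e(A,B)=\sup_{a\in A}D(a,B)$, $H(A,B)=\max\{e(A,B),e(B,A)\}$. *)

From mathcomp Require Import all_boot all_order all_algebra.
From mathcomp Require Import all_classical all_reals all_analysis.
Set Implicit Arguments. Unset Strict Implicit. Unset Printing Implicit Defensive.
Import Order.TTheory GRing.Theory Num.Theory.
Local Open Scope classical_set_scope.
Local Open Scope ring_scope.

Definition is_metric (R : realType) (X : Type) (d : X -> X -> R) : Prop :=
  [/\ (forall x y, 0 <= d x y),
      (forall x y, d x y = 0 <-> x = y),
      (forall x y, d x y = d y x) &
      (forall x y z, d x z <= d x y + d y z)].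

Definition cauchy_seq (R : realType) (X : Type) (d : X -> X -> R) (u : nat -> X) : Prop :=
  forall e : R, 0 < e -> exists N : nat, forall m n, (N <= m)%N -> (N <= n)%N -> d (u m) (u n) < e.

Definition converges_to (R : realType) (X : Type) (d : X -> X -> R) (u : nat -> X) (x : X) : Prop :=
  forall e : R, 0 < e -> exists N : nat, forall n, (N <= n)%N -> d (u n) x < e.

Definition complete_metric (R : realType) (X : Type) (d : X -> X -> R) : Prop :=
  forall u : nat -> X, cauchy_seq d u -> exists x, converges_to d u x.

Definition closed_in (R : realType) (X : Type) (d : X -> X -> R) (A : set X) : Prop :=
  forall x, (forall e : R, 0 < e -> exists2 a, A a & d x a < e) -> A x.

Definition Pcl (R : realType) (X : Type) (d : X -> X -> R) (A : set X) : Prop :=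
  A !=set0 /\ closed_in d A.

Definition Dist (R : realType) (X : Type) (d : X -> X -> R) (a : X) (B : set X) : \bar R :=
  ereal_inf [set (d a b)%:E | b in B].

Definition exc (R : realType) (X : Type) (d : X -> X -> R) (A B : set X) : \bar R :=
  ereal_sup [set Dist d a B | a in A].

Definition Haus (R : realType) (X : Type) (d : X -> X -> R) (A B : set X) : \bar R :=
  maxe (exc d A B) (exc d B A).

Definition SFix (X : Type) (T : X -> set X) : set X := [set x | T x = [set x]].

Definition TG (X : Type) (G : X -> X -> X) (T : X -> set X) (x : X) : set X :=
  G x @` T x.

Definition ecvg0 (R : realType) (u : nat -> \bar R) : Prop :=
  forall e : R, 0 < e -> exists N : nat, forall n, (N <= n)%N -> (u n < e%:E)%E.

From mathcomp Require Import all_boot all_order all_algebra.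
From mathcomp Require Import all_classical all_reals all_analysis.
From mathcomp Require Import ring lra.
Import Order.TTheory GRing.Theory Num.Theory.
Set Implicit Arguments. Unset Strict Implicit. Unset Printing Implicit Defensive.
Local Open Scope classical_set_scope.
Local Open Scope ring_scope.

(* Write x for the strict fixed point xstar.  Since T_G(x) = {x}, the
   contraction condition at the pair (y, x) gives H(T_G(y), {x}) <= k d(y, x)
   with k = (alpha + beta) / (1 - gamma) <= 1, and then (ii) gives
   d(b, x) <= l k d(y, x) for every b in T(y).  Hence a_n = d(v_n, x) satisfies
   a_(n+1) <= D(v_(n+1), T(v_n)) + l k a_n, a geometric recursion perturbed by
   a vanishing term, so a_n -> 0.  The same condition at the pair (y, x), for a
   second strict fixed point y, forces d(y, x) = 0. *)

Section Distance.
Variables (R : realType) (X : Type) (d : X -> X -> R).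

Lemma Dist_le a (B : set X) b : B b -> (Dist d a B <= (d a b)%:E)%E.
Proof. by move=> Bb; apply: ereal_inf_lbound; exists b. Qed.

Lemma Dist_ge a (B : set X) (r : R) :
  (forall b, B b -> r <= d a b) -> (r%:E <= Dist d a B)%E.
Proof. by move=> rB; apply: le_ereal_inf_tmp => _ [b Bb <-]; rewrite lee_fin rB. Qed.

Lemma Dist_set1 a b : Dist d a [set b] = (d a b)%:E.
Proof. by rewrite /Dist image_set1 ereal_inf1. Qed.

Lemma Dist_le_Haus_set1 x (A : set X) : (Dist d x A <= Haus d A [set x])%E.
Proof. by rewrite /Haus le_max; apply/orP; right; rewrite /exc image_set1 ereal_sup1. Qed.

Lemma dist_le_Haus_set1 x (A : set X) b :
  A b -> ((d b x)%:E <= Haus d A [set x])%E.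
Proof.
move=> Ab; rewrite -Dist_set1 /Haus le_max; apply/orP; left.
by apply: ereal_sup_ubound; exists b.
Qed.

Lemma Dist_fin_num a (B : set X) :
  is_metric d -> B !=set0 -> Dist d a B \is a fin_num.
Proof.
case=> d_ge0 _ _ _ [b Bb]; rewrite fin_numE; apply/andP; split.
- by rewrite gt_eqF // (lt_le_trans _ (Dist_ge (fun c _ => d_ge0 a c))) ?ltNyr.
- by rewrite lt_eqF // (le_lt_trans (Dist_le a Bb)) ?ltry.
Qed.

End Distance.

Section PerturbedGeometric.
Variable R : realType.

Lemma le_geometric_from (b : R^nat) (q : R) N : 0 <= q ->
  (forall n, (N <= n)%N -> b n.+1 <= q * b n) ->
  forall m, b (N + m)%N <= geometric (b N) q m.
Proof.
move=> q_ge0 b_rec; elim=> [|m IHm]; first by rewrite /= addn0 expr0 mulr1.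
rewrite addnS /= exprS mulrCA.
exact: le_trans (b_rec _ (leq_addr _ _)) (ler_wpM2l q_ge0 IHm).
Qed.

Lemma geometric_eventually_lt (a q e : R) : `|q| < 1 -> 0 < e ->
  exists N, forall n, (N <= n)%N -> geometric a q n < e.
Proof.
move=> q_lt1 e_gt0; have /cvgrPdist_lt/(_ e e_gt0) [N _ HN] := cvg_geometric a q_lt1.
exists N => n /HN; rewrite sub0r normrN; exact: le_lt_trans (ler_norm _).
Qed.

(* Shifting by e/2 turns a(n+1) < (1 - q) e/2 + q a(n) into an exact contraction. *)
Lemma perturbed_geometric_lt (a : R^nat) (q : R) : 0 <= q -> q < 1 ->
  (forall e, 0 < e -> exists N, forall n, (N <= n)%N -> a n.+1 < e + q * a n) ->
  forall e, 0 < e -> exists N, forall n, (N <= n)%N -> a n < e.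
Proof.
move=> q_ge0 q_lt1 a_rec e e_gt0.
have e'_gt0 : 0 < (1 - q) * e / 2 by rewrite divr_gt0 ?mulr_gt0 ?subr_gt0.
have [N1 HN1] := a_rec _ e'_gt0.
pose b n := a n - e / 2.
have b_rec n : (N1 <= n)%N -> b n.+1 <= q * b n.
  by move=> /HN1 an; rewrite /b; apply: ltW; lra.
have [N2 HN2] : exists N2, forall m, (N2 <= m)%N -> geometric (b N1) q m < e / 2.
  by apply: geometric_eventually_lt; rewrite ?ger0_norm ?divr_gt0.
exists (N1 + N2)%N => n Nn.
have N1n : (N1 <= n)%N by exact: leq_trans (leq_addr N2 N1) Nn.
have N2n : (N2 <= n - N1)%N by rewrite leq_subRL // addnC.
have := le_lt_trans (le_geometric_from q_ge0 b_rec (n - N1)) (HN2 _ N2n).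
by rewrite /b subnKC //; lra.
Qed.

End PerturbedGeometric.

Section AdmissiblePerturbation.
Variables (R : realType) (X : Type) (d : X -> X -> R).
Variables (G : X -> X -> X) (T : X -> set X) (alpha beta gamma l : R) (xstar : X).
Hypothesis d_metric : is_metric d.
Hypothesis G_diag : forall x, G x x = x.
Hypotheses (alpha_ge0 : 0 <= alpha) (beta_ge0 : 0 <= beta) (gamma_ge0 : 0 <= gamma).
Hypothesis abc_lt1 : alpha + beta + gamma < 1.
Hypothesis TG_contraction : forall x y,
  (Haus d (TG G T x) (TG G T y) <= (alpha * d x y)%:E + beta%:E * Dist d x (TG G T y)
      + gamma%:E * Dist d y (TG G T x))%E.
Hypothesis xstar_SFix : SFix T xstar.
Hypothesis l_ge0 : 0 <= l.
Hypothesis T_TG_Haus : forall x,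
  (Haus d (T x) [set xstar] <= l%:E * Haus d (TG G T x) [set xstar])%E.

Let k := (alpha + beta) / (1 - gamma).

Lemma TG_SFix y : SFix T y -> TG G T y = [set y].
Proof. by move=> Sy; rewrite /TG Sy image_set1 G_diag. Qed.

Lemma SFix_eq y : SFix T y -> y = xstar.
Proof.
case: d_metric => d_ge0 d_eq0 d_sym _ Sy; apply/d_eq0.
have := TG_contraction y xstar; rewrite !TG_SFix // !Dist_set1.
move/(le_trans (@dist_le_Haus_set1 _ _ d xstar [set y] y erefl)).
rewrite -!EFinM -!EFinD lee_fin d_sym => le_d; apply/eqP; rewrite eq_le d_ge0 andbT.
have : (1 - (alpha + beta + gamma)) * d xstar y <= 0 by lra.
by rewrite pmulr_rle0 ?subr_gt0.
Qed.

Lemma gamma_lt1 : gamma < 1.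
Proof. by apply: le_lt_trans abc_lt1; rewrite lerDr addr_ge0. Qed.

Lemma k_ge0 : 0 <= k.
Proof. by apply: divr_ge0; [exact: addr_ge0 | rewrite subr_ge0 ltW ?gamma_lt1]. Qed.

Lemma k_le1 : k <= 1.
Proof. by rewrite /k ler_pdivrMr ?subr_gt0 ?gamma_lt1 // mul1r lerBrDr ltW. Qed.

(* D(xstar, T_G y) occurs on both sides of the (y, xstar) instance of the
   contraction condition; it is bounded first, by absorbing the gamma term. *)
Lemma Haus_TG_le y : TG G T y !=set0 ->
  (Haus d (TG G T y) [set xstar] <= (k * d y xstar)%:E)%E.
Proof.
move=> TGy_ne; have Dfin := Dist_fin_num xstar d_metric TGy_ne.
have := TG_contraction y xstar; rewrite (TG_SFix xstar_SFix) Dist_set1.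
rewrite -(fineK Dfin) -!EFinM -!EFinD.
set p := fine _ => HTG; apply: (le_trans HTG); rewrite lee_fin.
have p_le : p <= alpha * d y xstar + beta * d y xstar + gamma * p.
  rewrite -lee_fin /p fineK //.
  exact: le_trans (Dist_le_Haus_set1 _ _ _) HTG.
have p_le_k : p <= k * d y xstar.
  by rewrite /k mulrAC ler_pdivlMr ?subr_gt0 ?gamma_lt1 //; lra.
have k_fix : alpha + beta + gamma * k = k.
  by rewrite /k; field; rewrite subr_eq0 gt_eqF ?gamma_lt1.
rewrite -[X in _ <= X * _]k_fix.
have := ler_wpM2l gamma_ge0 p_le_k; lra.
Qed.

Lemma dist_T_le y b : T y b -> d b xstar <= l * k * d y xstar.
Proof.
move=> Tyb; have TGy_ne : TG G T y !=set0 by exists (G y b); exists b.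
rewrite -lee_fin; apply: le_trans (dist_le_Haus_set1 _ _ Tyb) _.
rewrite -mulrA EFinM; apply: le_trans (T_TG_Haus y) _.
by apply: lee_wpmul2l; rewrite ?lee_fin ?Haus_TG_le.
Qed.

Lemma Dist_T_ge y z : ((d z xstar - l * k * d y xstar)%:E <= Dist d z (T y))%E.
Proof.
case: d_metric => _ _ _ d_tri; apply: Dist_ge => b /dist_T_le.
by have := d_tri z b xstar; lra.
Qed.

End AdmissiblePerturbation.

Theorem mainTheorem7 (R : realType) (X : Type) (d : X -> X -> R)
  (G : X -> X -> X) (T : X -> set X) (alpha beta gamma l L : R) (xstar : X) :
  is_metric d -> complete_metric d ->
  (forall x, G x x = x) ->
  (forall x y, G x y = x -> y = x) ->
  (forall x, Pcl d (T x)) ->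
  SFix T !=set0 ->
  0 <= alpha -> 0 <= beta -> 0 <= gamma -> alpha + beta + gamma < 1 ->
  (forall x y, (Haus d (TG G T x) (TG G T y) <=
      (alpha * d x y)%:E + beta%:E * Dist d x (TG G T y)
      + gamma%:E * Dist d y (TG G T x))%E) ->
  SFix T xstar ->
  0 < l -> l < 1 ->
  (forall x, (Haus d (T x) [set xstar] <= l%:E * Haus d (TG G T x) [set xstar])%E) ->
  0 < L ->
  (forall x, (Dist d x (TG G T x) <= L%:E * Dist d x (T x))%E) ->
  SFix T = [set xstar] /\
  (forall v : nat -> X, ecvg0 (fun n => Dist d (v n.+1) (T (v n))) ->
     converges_to d v xstar).
Proof.
move=> d_metric _ G_diag _ _ _ a_ge0 b_ge0 c_ge0 abc_lt1 TG_contr xstar_SFix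
  l_gt0 l_lt1 T_TG_Haus _ _.
split.
  apply/seteqP; split=> [y|_ ->] //.
  exact: (SFix_eq d_metric G_diag abc_lt1 TG_contr xstar_SFix).
move=> v v_approx.
have v_step := Dist_T_ge d_metric G_diag a_ge0 b_ge0 c_ge0 abc_lt1 TG_contr
  xstar_SFix (ltW l_gt0) T_TG_Haus.
set q := l * ((alpha + beta) / (1 - gamma)).
have q_ge0 : 0 <= q by apply: mulr_ge0; [exact: ltW | exact: k_ge0].
have q_lt1 : q < 1.
  by apply: le_lt_trans l_lt1; apply: ler_piMr; [exact: ltW | exact: k_le1].
apply: (perturbed_geometric_lt q_ge0 q_lt1) => e e_gt0.
have [N HN] := v_approx e e_gt0; exists N => n Nn.
have := le_lt_trans (v_step (v n) (v n.+1)) (HN n Nn).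
by rewrite lte_fin /q; lra.
Qed.
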